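(* Let $\omega=(\omega_{n,s})$ be semivalue weights. Consider the two-player unanimity game $v$ on $\{A,B\}$ with $v(\{A,B\})=1$ and $v(T)=0$ for every proper subset $T$. Let provider $A$ split into $k\ge 2$ pseudonyms $A_1,\dots,A_k$, producing the $(k+1)$-player unanimity game $v'$ on $\{A_1,\dots,A_k,B\}$ ($v'(T)=1$ iff $T$ is the whole player set, else $0$). Then the additive split-gain, namely the total semivalue of the pseudonyms in $v'$ minus the semivalue of $A$ in $v$, equals \[\Gamma(\omega,k)=k\,\omega_{k+1,k}-\omega_{2,1},\] and, when $\omega_{2,1}>0$, the multiplicative split-gain (ratio of the pseudonyms' total semivalue in $v'$ to $A$'s semivalue in $v$) is $G(\omega,k)=k\,\omega_{k+1,k}/\omega_{2,1}$. In particular: for Shapley weights, $\Gamma=(k-1)/(2(k+1))>0$ for all $k\ge2$, converging to $1/2$ as $k\to\infty$; for raw Banzhaf weights, $\Gamma=k\,2^{-k}-1/2$, which is zero at $k=2$ and negative for all $k\ge3$; for Beta-Shapley the gain is obtained by substituting its weights into the general formula. Furthermore, for the $n$-player unanimity game ($v_n([n])=1$, $v_n=0$ on proper subsets) in which one player splits into $k$ pseudonyms, producing the $(n+k-1)$-player unanimity game, the Shapley multiplicative split-gain is $G_{\mathrm{Sh}}(n,k)=nk/(n+k-1)$, which is strictly greater than $1$ for all $n,k\ge2$.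
   Context: A semivalue with weights $\omega$ assigns to player $k$ in a game $w$ on $[K]$ the value $\varphi_k^\omega(w)=\sum_{Q\subseteq[K]\setminus\{k\}}\omega_{K,|Q|}\,[w(Q\cup\{k\})-w(Q)]$, where $\omega_{K,s}\ge0$ and $\sum_{s=0}^{K-1}\binom{K-1}{s}\omega_{K,s}=1$. Shapley weights are $\omega_{K,s}=1/(K\binom{K-1}{s})$; raw Banzhaf weights are $\omega_{K,s}=2^{-(K-1)}$; Beta-Shapley weights are a parametric coalition-size reweighting. *)

From HB Require Import structures.
From mathcomp Require Import all_boot all_order all_algebra.
From mathcomp Require Import all_classical all_reals all_analysis.
Set Implicit Arguments. Unset Strict Implicit. Unset Printing Implicit Defensive.
Import Order.TTheory GRing.Theory Num.Theory.
Local Open Scope ring_scope.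

Section Defs.
Variable R : realType.

(* omega K s = omega_{K,s}; games on K players have player set 'I_K *)
Definition semivalue_weights (omega : nat -> nat -> R) : Prop :=
  forall K : nat, (0 < K)%N ->
    (forall s : nat, (s < K)%N -> 0 <= omega K s) /\
    \sum_(s < K) ('C(K.-1, s))%:R * omega K s = 1.

Definition semivalue (omega : nat -> nat -> R) (K : nat)
  (w : {set 'I_K} -> R) (k : 'I_K) : R :=
  \sum_(Q : {set 'I_K} | k \notin Q) omega K #|Q| * (w (k |: Q) - w Q).

Definition unanimity (K : nat) : {set 'I_K} -> R :=
  fun T => if T == [set: 'I_K] then 1 else 0.

Definition shapley_weights : nat -> nat -> R :=
  fun K s => (K%:R * ('C(K.-1, s))%:R)^-1.

Definition banzhaf_weights : nat -> nat -> R :=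
  fun K s => (2 ^+ K.-1)^-1.

(* One player of the n-player unanimity game splits into k pseudonyms,
   giving the (n+k-1)-player unanimity game; the pseudonyms are the
   players 0, ..., k-1 of 'I_(n+k-1). *)
Definition pseudonyms_total (omega : nat -> nat -> R) (n k : nat) : R :=
  \sum_(i : 'I_((n + k - 1)%N) | (i < k)%N) semivalue omega (@unanimity (n + k - 1)%N) i.

Definition split_gain_add (omega : nat -> nat -> R) (n k : nat) (a : 'I_n) : R :=
  pseudonyms_total omega n k - semivalue omega (@unanimity n) a.

Definition split_gain_mult (omega : nat -> nat -> R) (n k : nat) (a : 'I_n) : R :=
  pseudonyms_total omega n k / semivalue omega (@unanimity n) a.

End Defs.

Arguments semivalue {R} omega K w k.
Arguments unanimity {R} K _.
Arguments pseudonyms_total {R} omega n k.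
Arguments split_gain_add {R} omega n k a.
Arguments split_gain_mult {R} omega n k a.

(* In a unanimity game a player changes the worth of a coalition only when it
   joins the coalition of all other players, so every player of the K-player
   unanimity game receives the single weight omega_{K,K-1}.  The k pseudonyms
   therefore receive k omega_{n+k-1,n+k-2} together, against omega_{n,n-1}
   before the split, and all the claims are arithmetic on these two weights:
   for Shapley weights omega_{K,K-1} = 1/K, for raw Banzhaf weights
   omega_{K,K-1} = 2^{-(K-1)}. *)
From HB Require Import structures.
From mathcomp Require Import all_boot all_order all_algebra.
From mathcomp Require Import all_classical all_reals all_analysis.
From mathcomp Require Import zify.
From mathcomp.algebra_tactics Require Import ring lra.
Import Order.TTheory GRing.Theory Num.Theory numFieldNormedType.Exports.
Local Open Scope ring_scope.

Section UnanimitySemivalue.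
Variables (R : realType) (omega : nat -> nat -> R).

Lemma unanimity_marginal_eq0 K (k : 'I_K) (Q : {set 'I_K}) :
  k \notin Q -> Q != [set~ k] -> unanimity K (k |: Q) - unanimity K Q = 0 :> R.
Proof.
move=> kNQ QNk; rewrite /unanimity.
have -> : (Q == [set: 'I_K]) = false.
  by apply/negbTE/eqP => QT; rewrite QT inE in kNQ.
suff -> : (k |: Q == [set: 'I_K]) = false by rewrite subrr.
apply/negbTE/eqP => /setP kQT; move/eqP: QNk; apply; apply/setP => x.
move: (kQT x); rewrite !inE; case: eqP => [->|_] //= _.
exact/negbTE.
Qed.

Lemma semivalue_unanimity K (k : 'I_K) :
  semivalue omega K (unanimity K) k = omega K K.-1.
Proof.
rewrite /semivalue (bigD1 [set~ k]) ?inE ?eqxx //= big1 => [|Q /andP[kNQ QNk]].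
  rewrite addr0 cardsC1 card_ord /unanimity finset.setUCr eqxx ifF ?subr0 ?mulr1 //.
  by apply/eqP => /setP /(_ k); rewrite !inE eqxx.
by rewrite unanimity_marginal_eq0 ?mulr0.
Qed.

Lemma pseudonyms_total_unanimity n k : (0 < n)%N ->
  pseudonyms_total omega n k = k%:R * omega (n + k - 1)%N (n + k - 1).-1.
Proof.
move=> n_gt0; rewrite /pseudonyms_total.
under eq_bigr do rewrite semivalue_unanimity.
rewrite -(big_ord_widen _ (fun=> omega (n + k - 1)%N (n + k - 1).-1)); last lia.
by rewrite sumr_const card_ord mulr_natl.
Qed.

Lemma split_gain_add_unanimity n k (a : 'I_n) :
  split_gain_add omega n k a
  = k%:R * omega (n + k - 1)%N (n + k - 1).-1 - omega n n.-1.
Proof.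
by rewrite /split_gain_add pseudonyms_total_unanimity ?semivalue_unanimity //;
  apply: leq_ltn_trans (ltn_ord a).
Qed.

Lemma split_gain_mult_unanimity n k (a : 'I_n) :
  split_gain_mult omega n k a
  = k%:R * omega (n + k - 1)%N (n + k - 1).-1 / omega n n.-1.
Proof.
by rewrite /split_gain_mult pseudonyms_total_unanimity ?semivalue_unanimity //;
  apply: leq_ltn_trans (ltn_ord a).
Qed.

Lemma add_subn1_2 k : (2 + k - 1 = k + 1)%N.
Proof. lia. Qed.

Lemma split_gain_add_unanimity2 k :
  split_gain_add omega 2 k ord0 = k%:R * omega (k + 1)%N k - omega 2%N 1%N.
Proof. by rewrite split_gain_add_unanimity add_subn1_2 addn1. Qed.

Lemma split_gain_mult_unanimity2 k :
  split_gain_mult omega 2 k ord0 = k%:R * omega (k + 1)%N k / omega 2%N 1%N.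
Proof. by rewrite split_gain_mult_unanimity add_subn1_2 addn1. Qed.

End UnanimitySemivalue.

Lemma shapley_weights_last (R : realType) K :
  @shapley_weights R K K.-1 = K%:R^-1.
Proof. by rewrite /shapley_weights binn mulr1. Qed.

Lemma shapley_split_gain_add2 (R : realType) k :
  split_gain_add (@shapley_weights R) 2 k ord0 = 2^-1 - harmonic k.
Proof.
rewrite split_gain_add_unanimity !shapley_weights_last add_subn1_2 addn1 /= -natr1.
by field; rewrite natr1 pnatr_eq0.
Qed.

Lemma shapley_split_gain_add2_closed (R : realType) k :
  split_gain_add (@shapley_weights R) 2 k ord0 = (k%:R - 1) / (2 * (k%:R + 1)).
Proof.
rewrite shapley_split_gain_add2 /=.
by field; rewrite natr1 pnatr_eq0.
Qed.

Lemma shapley_split_gain_add2_gt0 (R : realType) k : (2 <= k)%N ->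
  0 < split_gain_add (@shapley_weights R) 2 k ord0.
Proof.
move=> k_ge2; rewrite shapley_split_gain_add2 subr_gt0 /= ltf_pV2 ?posrE ?ltr0n //.
by rewrite ltr_nat ltnS.
Qed.

Lemma banzhaf_split_gain_add2 (R : realType) k :
  split_gain_add (@banzhaf_weights R) 2 k ord0 = k%:R / 2 ^+ k - 1 / 2.
Proof. by rewrite split_gain_add_unanimity2 /banzhaf_weights addn1 /= mul1r. Qed.

Lemma double_lt_exp2 k : (3 <= k)%N -> (2 * k < 2 ^ k)%N.
Proof.
elim: k => // k IHk; rewrite leq_eqVlt => /orP[/eqP <- // | k_ge3].
by rewrite expnS; move: (IHk k_ge3); lia.
Qed.

Lemma banzhaf_split_gain_add2_lt0 (R : realType) k : (3 <= k)%N ->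
  split_gain_add (@banzhaf_weights R) 2 k ord0 < 0.
Proof.
move=> k_ge3; rewrite banzhaf_split_gain_add2 subr_lt0 ltr_pdivrMr ?exprn_gt0 //.
have : (2 * k%:R < 2 ^+ k :> R) by rewrite -natrX -natrM ltr_nat double_lt_exp2.
lra.
Qed.

Lemma shapley_split_gain_mult (R : realType) n k (a : 'I_n) :
  (0 < k)%N ->
  split_gain_mult (@shapley_weights R) n k a = (n * k)%:R / (n + k - 1)%:R.
Proof.
move=> k_gt0; have n_gt0 : (0 < n)%N by apply: leq_ltn_trans (ltn_ord a).
rewrite split_gain_mult_unanimity !shapley_weights_last natrM.
by field; rewrite !pnatr_eq0 -!lt0n n_gt0; apply/andP; split => //; lia.
Qed.

Lemma shapley_split_gain_mult_gt1 (R : realType) n k (a : 'I_n) :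
  (2 <= n)%N -> (2 <= k)%N -> 1 < split_gain_mult (@shapley_weights R) n k a.
Proof.
move=> n_ge2 k_ge2; rewrite shapley_split_gain_mult; last lia.
rewrite ltr_pdivlMr ?mul1r ?ltr_nat ?ltr0n; last lia.
have : (2 * k <= n * k)%N /\ (n * 2 <= n * k)%N.
  by rewrite leq_mul2r leq_mul2l n_ge2 k_ge2 !orbT.
lia.
Qed.

Local Open Scope classical_set_scope.

Theorem proposition1 (R : realType) :
  (* general two-player formula; A = player 0 of 'I_2 *)
  (forall (omega : nat -> nat -> R) (k : nat),
     semivalue_weights omega -> (2 <= k)%N ->
     split_gain_add omega 2 k ord0 = k%:R * omega (k + 1)%N k - omega 2%N 1%N /\
     (0 < omega 2%N 1%N ->
        split_gain_mult omega 2 k ord0 = k%:R * omega (k + 1)%N k / omega 2%N 1%N)) /\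
  (* Shapley *)
  (forall k : nat, (2 <= k)%N ->
     split_gain_add (@shapley_weights R) 2 k ord0 = (k%:R - 1) / (2 * (k%:R + 1)) /\
     0 < split_gain_add (@shapley_weights R) 2 k ord0) /\
  ((fun k : nat => split_gain_add (@shapley_weights R) 2 k ord0) @ \oo --> (1 / 2 : R)) /\
  (* raw Banzhaf *)
  (forall k : nat, (2 <= k)%N ->
     split_gain_add (@banzhaf_weights R) 2 k ord0 = k%:R / 2 ^+ k - 1 / 2) /\
  split_gain_add (@banzhaf_weights R) 2 2 ord0 = 0 /\
  (forall k : nat, (3 <= k)%N -> split_gain_add (@banzhaf_weights R) 2 k ord0 < 0) /\
  (* n-player unanimity game, Shapley multiplicative gain *)
  (forall (n k : nat) (a : 'I_n), (2 <= n)%N -> (2 <= k)%N ->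
     split_gain_mult (@shapley_weights R) n k a = (n * k)%:R / (n + k - 1)%:R /\
     1 < split_gain_mult (@shapley_weights R) n k a).
Proof.
split.
  (* the formulas hold for arbitrary weights, normalised or not *)
  move=> omega k _ _.
  by split=> [|_]; [exact: split_gain_add_unanimity2 | exact: split_gain_mult_unanimity2].
split.
  move=> k k_ge2.
  by split; [exact: shapley_split_gain_add2_closed | exact: shapley_split_gain_add2_gt0].
split.
  under [fun k => _]funext do rewrite shapley_split_gain_add2.
  by rewrite -[1 / 2]subr0 div1r; apply: cvgB; [exact: cvg_cst | exact: cvg_harmonic].
split; first by move=> k _; exact: banzhaf_split_gain_add2.
split; first by rewrite banzhaf_split_gain_add2 expr2; field.
split; first exact: banzhaf_split_gain_add2_lt0.
move=> n k a n_ge2 k_ge2.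
split; last exact: shapley_split_gain_mult_gt1.
by rewrite shapley_split_gain_mult //; lia.
Qed.
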